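(* Let $Y\in\{0,1\}$, $\mathbf{B}\in\mathbb{R}^n$, and for $i=1,\dots,r$ let $Z_i\in\mathbb{R}$, $A_i\in\{0,1\}$. Let $\sigma(x)=1/(1+e^{-x})$. Assume: (C1) $\mathbf{p}(Y=1\mid\mathbf{b})=\sigma(\mathbf{w}^\top\mathbf{b}+t)$ for some $\mathbf{w}\in\mathbb{R}^n$, $t\in\mathbb{R}$; (C2) for all $\mathcal{I}\subseteq[r]$: $\mathbf{p}(\mathbf{A}_{\mathcal{I}}=\mathbf{1}\mid\mathbf{b},y)=\prod_{i\in\mathcal{I}}\mathbf{p}(A_i=1\mid\mathbf{b},y)$; (C3) for all $\mathcal{I}\subseteq[r]$: $\mathbf{p}(\mathbf{z}_{\mathcal{I}}\mid\mathbf{b},y,\mathbf{A}_{\mathcal{I}}=\mathbf{1})=\prod_{i\in\mathcal{I}}\mathbf{p}(z_i\mid\mathbf{b},y,A_i=1)$; (C4) there is a function $N(\mathbf{b})>0$ and $\mathbf{u}_i\in\mathbb{R}^n$, $\lambda_i\in\mathbb{R}$ with $\mathbf{p}(A_i=1\mid\mathbf{b},Y=1)=N(\mathbf{b})\sigma(\mathbf{u}_i^\top\mathbf{b}+\lambda_i)$ and $\mathbf{p}(A_i=1\mid\mathbf{b},Y=0)=N(\mathbf{b})-\mathbf{p}(A_i=1\mid\mathbf{b},Y=1)$; (C5) $(Z_i\mid\mathbf{b},y,A_i=1)\sim\mathcal{N}(\mathbf{v}_i^\top\mathbf{b}+\tau_i(y),\eta^2)$ for some $\mathbf{v}_i\in\mathbb{R}^n$,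 $\tau_i(0),\tau_i(1)\in\mathbb{R}$, $\eta>0$. Then for every $\mathcal{I}\subseteq[r]$, $$\frac{\mathbf{p}(Y=1\mid\mathbf{b},\mathbf{z}_{\mathcal{I}},\mathbf{A}_{\mathcal{I}}=\mathbf{1})}{\mathbf{p}(Y=0\mid\mathbf{b},\mathbf{z}_{\mathcal{I}},\mathbf{A}_{\mathcal{I}}=\mathbf{1})}=\exp\Big[\mathbf{w}^\top\mathbf{b}+t+\sum_{i\in\mathcal{I}}\big((\mathbf{u}_i-\boldsymbol\gamma_i)^\top\mathbf{b}+\beta_i z_i+\lambda_i+\theta_i\big)\Big],$$ where $\beta_i=\eta^{-2}(\tau_i(1)-\tau_i(0))$, $\boldsymbol\gamma_i=\beta_i\mathbf{v}_i$, and $\theta_i=\tfrac12\eta^{-2}(\tau_i(0)^2-\tau_i(1)^2)$. In particular, each such conditional distribution is of logistic-regression form.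
   Context: For a vector $\mathbf{v}$ and $\mathcal{I}\subseteq[r]=\{1,\dots,r\}$, $\mathbf{v}_{\mathcal{I}}$ is the subvector with indices in $\mathcal{I}$; $\mathbf{A}_{\mathcal{I}}=\mathbf{1}$ means $A_i=1$ for all $i\in\mathcal{I}$ (other features marginalized). $Z_i$ is only observed when $A_i=1$. *)

From HB Require Import structures.
From mathcomp Require Import all_boot all_order all_algebra.
From mathcomp Require Import all_classical all_reals.
From mathcomp Require Import all_analysis.
Set Implicit Arguments. Unset Strict Implicit. Unset Printing Implicit Defensive.
Import Order.TTheory GRing.Theory Num.Theory.
Local Open Scope ring_scope.

Definition sigmoid {R : realType} (x : R) : R := (1 + expR (- x))^-1.

Definition dotv {R : realType} {n : nat} (u b : 'rV[R]_n) : R :=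
  \sum_(j < n) u 0 j * b 0 j.

(* Joint (conditional on b) density of (Y = y, A_I = 1, z_I):
     p(y | b) * p(A_I = 1 | b, y) * p(z_I | b, y, A_I = 1),
   where pY b y = p(Y=y|b), pA I b y = p(A_I = 1 | b, y),
   pZ I b y z = p(z_I | b, y, A_I = 1) (z : 'I_r -> R, only z_I relevant). *)
Definition joint {R : realType} {n r : nat}
  (pY : 'rV[R]_n -> bool -> R)
  (pA : {set 'I_r} -> 'rV[R]_n -> bool -> R)
  (pZ : {set 'I_r} -> 'rV[R]_n -> bool -> ('I_r -> R) -> R)
  (I : {set 'I_r}) (b : 'rV[R]_n) (z : 'I_r -> R) (y : bool) : R :=
  pY b y * pA I b y * pZ I b y z.

Definition posterior {R : realType} {n r : nat}
  (pY : 'rV[R]_n -> bool -> R)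
  (pA : {set 'I_r} -> 'rV[R]_n -> bool -> R)
  (pZ : {set 'I_r} -> 'rV[R]_n -> bool -> ('I_r -> R) -> R)
  (I : {set 'I_r}) (b : 'rV[R]_n) (z : 'I_r -> R) (y : bool) : R :=
  joint pY pA pZ I b z y / (joint pY pA pZ I b z false + joint pY pA pZ I b z true).

From HB Require Import structures.
From mathcomp Require Import all_boot all_order all_algebra.
From mathcomp Require Import all_classical all_reals.
From mathcomp Require Import all_analysis.
From mathcomp Require Import ring.
Import Order.TTheory GRing.Theory Num.Theory.
Local Open Scope ring_scope.

(** Bayes' rule says the posterior odds of [Y = 1] equal the ratio of the two
    joint densities, and by the conditional-independence assumptions that ratio
    factors over the prior and the observed features. Each factor is an
    exponential: the prior and the missingness mechanism are logistic, so their
    odds are [exp] of an affine function, and two Gaussians with equal variance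
    have a likelihood ratio [exp] of an affine function of [z_i]. Multiplying
    the factors adds the exponents. *)

Section odds.
Context {R : realType}.

Lemma subr_sigmoid_gt0 (a : R) : 0 < 1 - sigmoid a.
Proof.
have den_gt0 : 0 < 1 + expR (- a) by rewrite addr_gt0 ?expR_gt0.
have -> : 1 - sigmoid a = expR (- a) / (1 + expR (- a)).
  by rewrite /sigmoid; field; rewrite gt_eqF.
by rewrite divr_gt0 ?expR_gt0.
Qed.

Lemma sigmoid_odds (a : R) : sigmoid a = expR a * (1 - sigmoid a).
Proof.
have ea_gt0 := expR_gt0 a.
by rewrite /sigmoid expRN; field; rewrite !gt_eqF ?addr_gt0.
Qed.

Lemma bayes_odds (p0 p1 s : R) : 0 < p0 -> p1 = expR s * p0 ->
  p1 / (p0 + p1) / (p0 / (p0 + p1)) = expR s.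
Proof.
move=> p0_gt0 ->; have sum_gt0 : 0 < p0 + expR s * p0.
  by rewrite addr_gt0 // mulr_gt0 ?expR_gt0.
by field; rewrite !gt_eqF.
Qed.

Lemma bayes_sigmoid (p0 p1 s : R) : 0 < p0 -> p1 = expR s * p0 ->
  p1 / (p0 + p1) = sigmoid s.
Proof.
move=> p0_gt0 ->; rewrite /sigmoid expRN.
have es_gt0 := expR_gt0 s.
by field; rewrite !gt_eqF // ?addr_gt0 // mulr_gt0.
Qed.

Lemma prodr_expR_scale {T : finType} (P : {set T}) {f g k : T -> R} :
  (forall i, f i = expR (k i) * g i) ->
  \prod_(i in P) f i = expR (\sum_(i in P) k i) * \prod_(i in P) g i.
Proof. by move=> fE; rewrite expR_sum -big_split; apply: eq_bigr. Qed.

Lemma normal_pdf_gt0 (m s x : R) : s != 0 -> 0 < normal_pdf m s x.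
Proof. by move=> s0; rewrite normal_pdfE // mulr_gt0 ?normal_peak_gt0 ?expR_gt0. Qed.

(* Equal variances make the quadratic terms in [x] cancel. *)
Lemma normal_pdf_mean_shift (m0 m1 s x : R) : s != 0 ->
  normal_pdf m1 s x =
    expR ((m1 - m0) / s ^+ 2 * x + (m0 ^+ 2 - m1 ^+ 2) / (s ^+ 2 *+ 2))
    * normal_pdf m0 s x.
Proof.
move=> s0; rewrite !normal_pdfE // /normal_fun mulrCA -expRD.
by congr (_ * expR _); field.
Qed.

Lemma dotvBZ (n : nat) (u v b : 'rV[R]_n) (c : R) :
  dotv (u - c *: v) b = dotv u b - c * dotv v b.
Proof.
rewrite /dotv mulr_sumr -sumrN -big_split /=; apply: eq_bigr => j _.
by rewrite !mxE mulrDl mulNr mulrA.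
Qed.

End odds.

Section logistic_missingness_model.
Context {R : realType} {n r : nat}.
Context {pY : 'rV[R]_n -> bool -> R}
  {pA : {set 'I_r} -> 'rV[R]_n -> bool -> R}
  {pZ : {set 'I_r} -> 'rV[R]_n -> bool -> ('I_r -> R) -> R}.
Context {w : 'rV[R]_n} {t : R} {N : 'rV[R]_n -> R} {u : 'I_r -> 'rV[R]_n}
  {lam : 'I_r -> R} {v : 'I_r -> 'rV[R]_n} {tau : 'I_r -> bool -> R} {eta : R}.

Hypothesis pY_false : forall b, pY b false = 1 - pY b true.
Hypothesis pY_true : forall b, pY b true = sigmoid (dotv w b + t).
Hypothesis pA_prod : forall I b y, pA I b y = \prod_(i in I) pA [set i] b y.
Hypothesis pZ_prod : forall I b y z, pZ I b y z = \prod_(i in I) pZ [set i] b y z.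
Hypothesis N_gt0 : forall b, 0 < N b.
Hypothesis pA_true :
  forall i b, pA [set i] b true = N b * sigmoid (dotv (u i) b + lam i).
Hypothesis pA_false : forall i b, pA [set i] b false = N b - pA [set i] b true.
Hypothesis eta_gt0 : 0 < eta.
Hypothesis pZ_normal : forall i b y z,
  pZ [set i] b y z = normal_pdf (dotv (v i) b + tau i y) eta (z i).

Local Notation beta i := ((tau i true - tau i false) / eta ^+ 2).
Local Notation theta i := ((tau i false ^+ 2 - tau i true ^+ 2) / (eta ^+ 2 *+ 2)).

Lemma pY_odds b : pY b true = expR (dotv w b + t) * pY b false.
Proof. by rewrite pY_false pY_true -sigmoid_odds. Qed.

Lemma pY_false_gt0 b : 0 < pY b false.
Proof. by rewrite pY_false pY_true subr_sigmoid_gt0. Qed.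

Lemma pA_odds i b :
  pA [set i] b true = expR (dotv (u i) b + lam i) * pA [set i] b false.
Proof.
by rewrite pA_false pA_true -{2}[N b]mulr1 -mulrBr mulrCA -sigmoid_odds.
Qed.

Lemma pA_false_gt0 i b : 0 < pA [set i] b false.
Proof.
by rewrite pA_false pA_true -{1}[N b]mulr1 -mulrBr mulr_gt0 ?subr_sigmoid_gt0.
Qed.

Lemma pZ_odds i b z : pZ [set i] b true z =
  expR (beta i * (z i - dotv (v i) b) + theta i) * pZ [set i] b false z.
Proof.
rewrite !pZ_normal.
rewrite (normal_pdf_mean_shift (dotv (v i) b + tau i false)) ?gt_eqF //.
by congr (expR _ * _); field; rewrite gt_eqF.
Qed.

Lemma pZ_false_gt0 i b z : 0 < pZ [set i] b false z.
Proof. by rewrite pZ_normal normal_pdf_gt0 ?gt_eqF. Qed.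

Lemma joint_false_gt0 I b z : 0 < joint pY pA pZ I b z false.
Proof.
rewrite /joint pA_prod pZ_prod !mulr_gt0 ?pY_false_gt0 //.
- by apply: prodr_gt0 => i _; exact: pA_false_gt0.
- by apply: prodr_gt0 => i _; exact: pZ_false_gt0.
Qed.

Lemma joint_odds I b z : joint pY pA pZ I b z true =
  expR (dotv w b + t + \sum_(i in I)
          (dotv (u i - beta i *: v i) b + beta i * z i + lam i + theta i))
  * joint pY pA pZ I b z false.
Proof.
have -> : \sum_(i in I)
    (dotv (u i - beta i *: v i) b + beta i * z i + lam i + theta i) =
  \sum_(i in I) (dotv (u i) b + lam i)
  + \sum_(i in I) (beta i * (z i - dotv (v i) b) + theta i).
  by rewrite -big_split; apply: eq_bigr => i _; rewrite /= dotvBZ; ring.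
rewrite /joint pA_prod pZ_prod (pA_prod I) (pZ_prod I) pY_odds.
rewrite (prodr_expR_scale I (pA_odds^~ b)).
rewrite (prodr_expR_scale I (fun i => pZ_odds i b z)).
by rewrite !expRD; ring.
Qed.

End logistic_missingness_model.

Theorem mainTheorem3 (R : realType) (n r : nat)
  (pY : 'rV[R]_n -> bool -> R)
  (pA : {set 'I_r} -> 'rV[R]_n -> bool -> R)
  (pZ : {set 'I_r} -> 'rV[R]_n -> bool -> ('I_r -> R) -> R)
  (w : 'rV[R]_n) (t : R)
  (N : 'rV[R]_n -> R) (u : 'I_r -> 'rV[R]_n) (lam : 'I_r -> R)
  (v : 'I_r -> 'rV[R]_n) (tau : 'I_r -> bool -> R) (eta : R) :
  (* Y is binary *)
  (forall b, pY b false = 1 - pY b true) ->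
  (* (C1) *)
  (forall b, pY b true = sigmoid (dotv w b + t)) ->
  (* (C2) *)
  (forall I b y, pA I b y = \prod_(i in I) pA [set i] b y) ->
  (* (C3) *)
  (forall I b y z, pZ I b y z = \prod_(i in I) pZ [set i] b y z) ->
  (* (C4) *)
  (forall b, 0 < N b) ->
  (forall i b, pA [set i] b true = N b * sigmoid (dotv (u i) b + lam i)) ->
  (forall i b, pA [set i] b false = N b - pA [set i] b true) ->
  (* (C5) *)
  0 < eta ->
  (forall i b y z, pZ [set i] b y z = normal_pdf (dotv (v i) b + tau i y) eta (z i)) ->
  forall (I : {set 'I_r}) (b : 'rV[R]_n) (z : 'I_r -> R),
    let beta i := (tau i true - tau i false) / eta ^+ 2 in
    let gamma i := beta i *: v i in
    let theta i := (tau i false ^+ 2 - tau i true ^+ 2) / (eta ^+ 2 *+ 2) in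
    let s := dotv w b + t +
      \sum_(i in I) (dotv (u i - gamma i) b + beta i * z i + lam i + theta i) in
    posterior pY pA pZ I b z true / posterior pY pA pZ I b z false = expR s
    /\ posterior pY pA pZ I b z true = sigmoid s.
Proof.
move=> pY_false pY_true pA_prod pZ_prod N_gt0 pA_true pA_false eta_gt0 pZ_normal.
move=> I b z beta gamma theta s.
have odds : joint pY pA pZ I b z true = expR s * joint pY pA pZ I b z false.
  exact: (joint_odds pY_false pY_true pA_prod pZ_prod pA_true pA_false
    eta_gt0 pZ_normal).
have pos := joint_false_gt0 pY_false pY_true pA_prod pZ_prod N_gt0 pA_true
  pA_false eta_gt0 pZ_normal I b z.
rewrite /posterior; split; first exact: bayes_odds pos odds.
exact: bayes_sigmoid pos odds.
Qed.
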